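(* Let $\mathbf{u}_1,\ldots,\mathbf{u}_n\in\mathbb{C}^d$ satisfy $\sum_{i=1}^n\mathbf{u}_i\mathbf{u}_i^*=\frac{n}{d}\cdot\mathbf{I}$. If $n\le 2d-1$, then for any $\varepsilon_1,\ldots,\varepsilon_n\in\{-1,1\}$, $$\Big\|\sum_{i=1}^n\varepsilon_i\mathbf{u}_i\mathbf{u}_i^*\Big\|=\frac{n}{d}.$$
   Context: $\|\cdot\|$ is the spectral norm. *)

From HB Require Import structures.
From mathcomp Require Import all_boot all_order all_algebra.
From mathcomp Require Import all_classical all_reals all_analysis.
From mathcomp Require Import complex spectral.
Set Implicit Arguments. Unset Strict Implicit. Unset Printing Implicit Defensive.
Import Order.TTheory GRing.Theory Num.Theory.
Local Open Scope ring_scope.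
Local Open Scope classical_set_scope.

Definition vnorm (R : realType) (d : nat) (x : 'cV[R[i]]_d) : R :=
  Num.sqrt (\sum_(k < d) (ComplexField.Normc.normc (x k ord0)) ^+ 2).

Definition spnorm (R : realType) (m n : nat) (A : 'M[R[i]]_(m, n)) : R :=
  sup [set vnorm (A *m x) | x in [set x : 'cV[R[i]]_n | vnorm x <= 1]].

From HB Require Import structures.
From mathcomp Require Import all_boot all_order all_algebra.
From mathcomp Require Import all_classical all_reals all_analysis.
From mathcomp Require Import complex spectral.
From mathcomp Require Import ring zify.
Set Implicit Arguments. Unset Strict Implicit. Unset Printing Implicit Defensive.
Import Order.TTheory GRing.Theory Num.Theory.
Local Open Scope ring_scope.
Local Open Scope sesquilinear_scope.

(** Split the frame according to the signs: [A] collects the [u_i u_i^*] with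
    [eps_i = 1] and [B] those with [eps_i = -1], so that [A + B = (n/d) I] and
    the matrix of the theorem is [A - B].  The positive semidefinite matrices
    [A] and [B] commute, and [(n/d) A B = A B A + B A B] is positive
    semidefinite, hence [|(A - B) x|^2 = |(A + B) x|^2 - 4 Re <A x, B x>]
    is at most [(n/d)^2 |x|^2].  Conversely [rank A + rank B <= n < 2 d], so
    one of them has a kernel vector, which is an eigenvector of [A - B] for
    the eigenvalue [n/d] or [-n/d]. *)

Lemma sum_signs_split (K : pzRingType) (V : lmodType K) n (eps : 'I_n -> K)
    (F : 'I_n -> V) : (forall k, eps k = 1 \/ eps k = -1) ->
  \sum_(k < n) eps k *: F k = \sum_(k | eps k == 1) F k - \sum_(k | eps k != 1) F k.
Proof.
move=> eps_sign; rewrite (bigID (fun k => eps k == 1)) /= -sumrN.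
congr (_ + _); apply: eq_bigr => k; first by move/eqP ->; rewrite scale1r.
by case: (eps_sign k) => ->; rewrite ?eqxx // => _; rewrite scaleN1r.
Qed.

Section ComplexColumnVectors.
Variable R : realType.
Local Notation C := R[i].
Local Notation normc := (@ComplexField.Normc.normc R).
Local Notation "x %:C" := (real_complex R x) (format "x %:C").

Lemma normcE (z : C) : (normc z)%:C = `|z|.
Proof. by case: z. Qed.

Lemma normc_ge0 (z : C) : 0 <= normc z.
Proof. by case: z => a b; apply: sqrtr_ge0. Qed.

Lemma normc_real (r : R) : normc r%:C = `|r|.
Proof. by rewrite /= expr0n /= addr0 sqrtr_sqr. Qed.

Definition cvdot d (x y : 'cV[C]_d) : C := (x^t* *m y) 0 0.

Lemma vnorm_ge0 d (x : 'cV[C]_d) : 0 <= vnorm x.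
Proof. exact: sqrtr_ge0. Qed.

Lemma vnorm0 d : vnorm (0 : 'cV[C]_d) = 0.
Proof.
by rewrite /vnorm big1 ?sqrtr0 // => k _; rewrite mxE ComplexField.Normc.normc0 expr0n.
Qed.

Lemma vnorm_sqr d (x : 'cV[C]_d) : ((vnorm x) ^+ 2)%:C = cvdot x x.
Proof.
rewrite /vnorm sqr_sqrtr; last by apply: sumr_ge0 => k _; exact: sqr_ge0.
rewrite /cvdot mxE rmorph_sum; apply: eq_bigr => k _.
by rewrite rmorphXn /= normcE normCK !mxE mulrC.
Qed.

Lemma cvdot_ge0 d (x : 'cV[C]_d) : 0 <= cvdot x x.
Proof. by rewrite -vnorm_sqr ler0c sqr_ge0. Qed.

Lemma vnormZ d (z : C) (x : 'cV[C]_d) : vnorm (z *: x) = normc z * vnorm x.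
Proof.
rewrite /vnorm; under eq_bigr do rewrite mxE ComplexField.Normc.normcM exprMn.
by rewrite -mulr_sumr sqrtrM ?sqr_ge0 // sqrtr_sqr ger0_norm ?normc_ge0.
Qed.

Lemma vnorm_eq0 d (x : 'cV[C]_d) : (vnorm x == 0) = (x == 0).
Proof.
apply/idP/eqP => [|->]; last by rewrite vnorm0.
rewrite sqrtr_eq0 => sum_le0.
have sum_eq0 : \sum_(k < d) normc (x k ord0) ^+ 2 = 0.
  by apply/eqP; rewrite eq_le sum_le0 sumr_ge0 // => k _; exact: sqr_ge0.
apply/matrixP => k j; rewrite (ord1 j) mxE.
have /eqP := psumr_eq0P (fun k _ => sqr_ge0 _) sum_eq0 (i := k) isT.
by rewrite expf_eq0 /= => /eqP/ComplexField.Normc.eq0_normc.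
Qed.

Lemma vnorm_le_cvdot d (x y : 'cV[C]_d) (a : R) : 0 <= a ->
  cvdot y y <= (a ^+ 2)%:C * cvdot x x -> vnorm y <= a * vnorm x.
Proof.
move=> a_ge0; rewrite -!vnorm_sqr -rmorphM lecR -exprMn => le_sqr.
by rewrite -(ler_pXn2r (isT : (0 < 2)%N)) // nnegrE ?mulr_ge0 ?vnorm_ge0.
Qed.

Lemma cvdotDl d (x y z : 'cV[C]_d) : cvdot (x + y) z = cvdot x z + cvdot y z.
Proof. by rewrite /cvdot linearD /= map_mxD mulmxDl mxE. Qed.

Lemma cvdotDr d (x y z : 'cV[C]_d) : cvdot z (x + y) = cvdot z x + cvdot z y.
Proof. by rewrite /cvdot mulmxDr mxE. Qed.

Lemma cvdotNl d (x z : 'cV[C]_d) : cvdot (- x) z = - cvdot x z.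
Proof. by rewrite /cvdot linearN /= map_mxN mulNmx mxE. Qed.

Lemma cvdotNr d (x z : 'cV[C]_d) : cvdot z (- x) = - cvdot z x.
Proof. by rewrite /cvdot mulmxN mxE. Qed.

Lemma cvdotZl d (a : C) (x z : 'cV[C]_d) : cvdot (a *: x) z = a^* * cvdot x z.
Proof. by rewrite /cvdot linearZ /= map_mxZ -scalemxAl mxE. Qed.

Lemma cvdotZr d (a : C) (x z : 'cV[C]_d) : cvdot z (a *: x) = a * cvdot z x.
Proof. by rewrite /cvdot -scalemxAr mxE. Qed.

Lemma cvdot_polarization d (x y : 'cV[C]_d) :
  cvdot (x + y) (x + y) - cvdot (x - y) (x - y) = 2 * (cvdot x y + cvdot y x).
Proof. rewrite !(cvdotDl, cvdotDr, cvdotNl, cvdotNr); ring. Qed.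

Lemma cvdot_mulmxl d (A : 'M[C]_d) (x y : 'cV[C]_d) :
  cvdot (A *m x) y = cvdot x (A^t* *m y).
Proof. by rewrite /cvdot trmx_mul map_mxM mulmxA. Qed.

Lemma sup_attained (S : set R) (c : R) : S c -> ubound S c -> sup S = c.
Proof.
move=> Sc ubc; apply/eqP; rewrite eq_le; apply/andP; split.
  by apply: ge_sup; [exists c|].
by apply: sup_upper_bound; [split; exists c|].
Qed.

Lemma spnorm_attained m n (A : 'M[C]_(m, n)) (c : R) :
  (forall x, vnorm (A *m x) <= c * vnorm x) ->
  (exists2 x, vnorm x <= 1 & vnorm (A *m x) = c) -> spnorm A = c.
Proof.
move=> le_c [x0 x0_le1 Ax0_eq]; have c_ge0 : 0 <= c by rewrite -Ax0_eq vnorm_ge0.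
apply: sup_attained; first by exists x0.
move=> _ [x x_le1 <-]; apply: le_trans (le_c x) _.
by rewrite -[leRHS]mulr1 ler_wpM2l.
Qed.

Lemma spnorm_eigenvector d (A : 'M[C]_d) (a : C) (x : 'cV[C]_d) :
  (forall y, vnorm (A *m y) <= normc a * vnorm y) ->
  x != 0 -> A *m x = a *: x -> spnorm A = normc a.
Proof.
move=> le_a x_neq0 Ax_eq; apply: spnorm_attained => //.
have vx_neq0 : vnorm x != 0 by rewrite vnorm_eq0.
have unit_y : vnorm ((vnorm x)^-1%:C *: x) = 1.
  by rewrite vnormZ normc_real ger0_norm ?invr_ge0 ?vnorm_ge0 // mulVf.
exists ((vnorm x)^-1%:C *: x); first by rewrite unit_y.
by rewrite -scalemxAr Ax_eq scalerA mulrC -scalerA vnormZ unit_y mulr1.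
Qed.

Lemma exists_nonzero_kernel d (A : 'M[C]_d) : (\rank A < d)%N ->
  exists2 x : 'cV_d, x != 0 & A *m x = 0.
Proof.
move=> rank_lt; have : kermx A^T != 0.
  by rewrite -mxrank_eq0 mxrank_ker mxrank_tr subn_eq0 -ltnNge.
case/rowV0Pn => v /sub_kermxP vA v_neq0; exists v^T; first by rewrite trmx_eq0.
by rewrite -[A]trmxK -trmx_mul vA trmx0.
Qed.

Definition psdmx d (A : 'M[C]_d) := forall y, 0 <= cvdot y (A *m y).

Section PsdComplements.
Variables (d : nat) (c : R).
Hypothesis c_gt0 : 0 < c.

Lemma psdmx_complement_cross_ge0 (A B : 'M[C]_d) :
  A^t* = A -> B^t* = B -> psdmx A -> psdmx B -> A + B = c%:C%:M ->
  forall x, 0 <= c%:C * cvdot (A *m x) (B *m x).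
Proof.
move=> hermA hermB psdA psdB sumAB x.
have Bc : B = c%:C%:M - A by rewrite -sumAB addrC addKr.
have commAB : A *m B = B *m A.
  by rewrite Bc mulmxBr mulmxBl mul_mx_scalar mul_scalar_mx.
have cx : c%:C *: x = A *m x + B *m x by rewrite -mulmxDl sumAB mul_scalar_mx.
rewrite -cvdotZr scalemxAr cx mulmxDr cvdotDr addr_ge0 //.
rewrite cvdot_mulmxl hermA !mulmxA commAB -!mulmxA -{1}hermB -cvdot_mulmxl.
exact: psdA.
Qed.

Lemma vnorm_psdmx_sub_le (A B : 'M[C]_d) :
  A^t* = A -> B^t* = B -> psdmx A -> psdmx B -> A + B = c%:C%:M ->
  forall x, vnorm ((A - B) *m x) <= c * vnorm x.
Proof.
move=> hermA hermB psdA psdB sumAB x.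
have crossAB := psdmx_complement_cross_ge0 hermA hermB psdA psdB sumAB x.
have crossBA := psdmx_complement_cross_ge0 hermB hermA psdB psdA
  (etrans (addrC B A) sumAB) x.
have cross_ge0 : 0 <= cvdot (A *m x) (B *m x) + cvdot (B *m x) (A *m x).
  by rewrite -(@pmulr_rge0 _ c%:C) ?ltcR // mulrDr addr_ge0.
apply: vnorm_le_cvdot; first exact: ltW.
have -> : (c ^+ 2)%:C * cvdot x x = cvdot ((A + B) *m x) ((A + B) *m x).
  rewrite sumAB mul_scalar_mx cvdotZl cvdotZr geC0_conj ?ler0c ?ltW //.
  by rewrite mulrA rmorphXn expr2.
rewrite -subr_ge0 mulmxDl mulmxBl cvdot_polarization.
by rewrite mulr_ge0.
Qed.

Lemma spnorm_psdmx_sub (A B : 'M[C]_d) :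
  A^t* = A -> B^t* = B -> psdmx A -> psdmx B -> A + B = c%:C%:M ->
  (\rank A < d)%N \/ (\rank B < d)%N -> spnorm (A - B) = c.
Proof.
move=> hermA hermB psdA psdB sumAB rank_lt.
have normc_c : normc c%:C = c by rewrite normc_real gtr0_norm.
have sumABx (x : 'cV_d) : A *m x + B *m x = c%:C *: x.
  by rewrite -mulmxDl sumAB mul_scalar_mx.
have le_c := vnorm_psdmx_sub_le hermA hermB psdA psdB sumAB.
case: rank_lt => /exists_nonzero_kernel [x x_neq0 x_ker].
- have Bx : B *m x = c%:C *: x by rewrite -sumABx x_ker add0r.
  rewrite -normc_c -normcN; apply: spnorm_eigenvector x_neq0 _.
    by move=> y; rewrite normcN normc_c.
  by rewrite mulmxBl x_ker Bx sub0r scaleNr.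
- have Ax : A *m x = c%:C *: x by rewrite -sumABx x_ker addr0.
  rewrite -normc_c; apply: spnorm_eigenvector x_neq0 _.
    by move=> y; rewrite normc_c.
  by rewrite mulmxBl x_ker Ax subr0.
Qed.

End PsdComplements.

Section OuterProducts.
Variables (d n : nat) (u : 'I_n -> 'cV[C]_d) (P : pred 'I_n).

Lemma hermitian_sum_outer :
  (\sum_(k | P k) u k *m (u k)^t*)^t* = \sum_(k | P k) u k *m (u k)^t*.
Proof.
rewrite raddf_sum /= map_mx_sum; apply: eq_bigr => k _.
by rewrite trmx_mul map_mxM trmxCK.
Qed.

Lemma psdmx_sum_outer : psdmx (\sum_(k | P k) u k *m (u k)^t*).
Proof.
move=> y; rewrite /cvdot mulmx_suml mulmx_sumr summxE; apply: sumr_ge0 => k _.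
rewrite !mulmxA -mulmxA -[y^t* *m u k]trmxCK trmx_mul map_mxM trmxCK.
exact: cvdot_ge0.
Qed.

Lemma mxrank_sum_outer : (\rank (\sum_(k | P k) u k *m (u k)^t*)%R <= #|P|)%N.
Proof.
rewrite -sum1_card.
apply: (big_ind2 (fun (M : 'M[C]_d) k => \rank M <= k)%N).
- by rewrite mxrank0.
- move=> M1 k1 M2 k2 le1 le2.
  exact: leq_trans (mxrank_add M1 M2) (leq_add le1 le2).
- move=> k _; exact: leq_trans (mxrankM_maxr _ _) (rank_leq_row _).
Qed.

End OuterProducts.

End ComplexColumnVectors.

Local Notation "x %:C" := (real_complex _ x) (format "x %:C").

Theorem lemma5p2 (R : realType) (d n : nat) (u : 'I_n -> 'cV[R[i]]_d)
  (hu : \sum_(k < n) u k *m (u k)^t* = (n%:R / d%:R : R[i])%:M)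
  (hn : (n <= 2 * d - 1)%N)
  (eps : 'I_n -> R[i]) (heps : forall k, eps k = 1 \/ eps k = -1) :
  spnorm (\sum_(k < n) eps k *: (u k *m (u k)^t*)) = (n%:R / d%:R : R).
Proof.
case: n => [|n] in u hu hn eps heps *.
  rewrite big_ord0 mul0r; apply: spnorm_attained => [x|].
    by rewrite mul0mx vnorm0 mul0r.
  by exists 0; rewrite ?mul0mx vnorm0.
have d_gt0 : (0 < d)%N by lia.
pose pos := [pred k | eps k == 1].
pose A := \sum_(k | eps k == 1) u k *m (u k)^t*.
pose B := \sum_(k | eps k != 1) u k *m (u k)^t*.
have sumAB : A + B = (n.+1%:R / d%:R : R)%:C%:M.
  by rewrite rmorphM fmorphV /= !rmorph_nat -hu (bigID pos).
have hermA : A^t* = A := hermitian_sum_outer u pos.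
have hermB : B^t* = B := hermitian_sum_outer u [predC pos].
have rankA : (\rank A <= #|pos|)%N := mxrank_sum_outer u pos.
have rankB : (\rank B <= #|[predC pos]|)%N := mxrank_sum_outer u [predC pos].
rewrite sum_signs_split //.
apply: (spnorm_psdmx_sub _ hermA hermB) sumAB _.
- by rewrite divr_gt0 ?ltr0n.
- exact: psdmx_sum_outer.
- exact: psdmx_sum_outer.
have := cardC pos; rewrite card_ord => card_pos.
have rank_sum : (\rank A + \rank B <= n.+1)%N by rewrite -card_pos leq_add.
lia.
Qed.
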